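(* Assume $c_1c_2<1$ (in addition to $a_ia_j<1$, $a_ic_1<1$, $a_ic_2<1$). Let $\mathcal P$ be the horizontal path with vertices $(k+j,k)$, $0\le j\le N$, and labels $\boldsymbol b=(b_1,\dots,b_N)$, $b_j=a_{k+j}$. Then the probability mass function $\mathrm P^{\mathcal P}$ on $\mathbb Z^N$ coincides with $\mathrm P^{\boldsymbol b,c_1,c_2}_{\mathrm{stat\,Geo}}$.
   Context: Parameters: $N\ge1$, $a_1,\dots,a_N\in(0,1)$, $c_1,c_2>0$, indices of $a$ taken mod $N$. For the horizontal path, for $\boldsymbol\lambda=(\lambda_i^{(j)})_{i\in\{1,2\},0\le j\le N}\in\mathbb Z^{2N+2}$ define $$\mathrm{wt}^{\mathcal{GP}}(\boldsymbol\lambda)=c_1^{\lambda_1^{(0)}-\lambda_2^{(0)}}c_2^{\lambda_1^{(N)}-\lambda_2^{(N)}}\prod_{j=1}^N\Big[\prod_{i=1}^2b_j^{\lambda_i^{(j)}-\lambda_i^{(j-1)}}\mathbf 1\{\lambda_i^{(j)}\ge\lambda_i^{(j-1)}\}\Big]\mathbf 1\{\lambda_1^{(j-1)}\ge\lambda_2^{(j)}\},$$ $\mathrm{wt}^{\mathcal P}(\boldsymbol\lambda_1)=\sum_{\boldsymbol\lambda_2\in\mathbb Z^{N+1}}\mathrm{wt}^{\mathcal{GP}}(\boldsymbol\lambda_1,\boldsymbol\lambda_2)$, $Z=\sum_{\lambda_1^{(1)},\dots,\lambda_1^{(N)}\in\mathbb Z}\mathrm{wt}^{\mathcal P}(\boldsymbol\lambda_1)$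 for fixed $\lambda_1^{(0)}$ (finite, independent of $\lambda_1^{(0)}$ when $c_1c_2<1$), and $\mathrm P^{\mathcal P}(\mathbf L_1)=\mathrm{wt}^{\mathcal P}(\boldsymbol\lambda_1)/Z$ where $L_1(j)=\lambda_1^{(j)}-\lambda_1^{(0)}$. $\mathbb P^{\boldsymbol b,\boldsymbol b}_{\mathrm{GRW}}$: law of two independent walks $\mathbf L_1,\mathbf L_2$ with $L_i(0)=0$ and independent increments $L_i(j)-L_i(j-1)\sim\mathrm{Geom}(b_j)$ ($\mathbb P(\mathrm{Geom}(q)=n)=(1-q)q^n$). $V(\mathbf L)=(c_1c_2)^{\max_{1\le j\le N}(L_2(j)-L_1(j-1))}c_2^{L_1(N)-L_2(N)}$, $\mathbb P^{\boldsymbol b,c_1,c_2}_{\mathrm{stat\,Geo}}=V\,\mathbb P^{\boldsymbol b,\boldsymbol b}_{\mathrm{GRW}}/\mathbb E^{\boldsymbol b,\boldsymbol b}_{\mathrm{GRW}}[V]$, and $\mathrm P^{\boldsymbol b,c_1,c_2}_{\mathrm{stat\,Geo}}$ is the marginal law of $\mathbf L_1$. *)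

From HB Require Import structures.
From mathcomp Require Import all_boot all_order all_algebra.
From mathcomp Require Import all_classical all_reals.
From mathcomp Require Import ereal esum.
Unset Printing Implicit Defensive.
Import Order.TTheory GRing.Theory Num.Theory.
Local Open Scope ring_scope.

(* Paths are functions nat -> int; only indices 0..N are used.
   b : nat -> R gives the labels b_1..b_N (b 0 unused). *)

Section Defs.
Variable R : realType.

Definition ext0 {n : nat} (v : 'I_n -> int) (j : nat) : int :=
  match (insub j : option 'I_n) with Some i => v i | None => 0 end.

(* the path x0, v_1, ..., v_N  (v : 'I_N, v i = value at index i+1) *)
Definition path_of {n : nat} (x0 : int) (v : 'I_n -> int) (j : nat) : int :=
  if j is j'.+1 then ext0 v j' else x0.

Definition wtGP (N : nat) (b : nat -> R) (c1 c2 : R) (l1 l2 : nat -> int) : R :=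
  c1 ^ (l1 0%N - l2 0%N) * c2 ^ (l1 N - l2 N) *
  \prod_(1 <= j < N.+1)
     ( (b j ^ (l1 j - l1 j.-1) * ((l1 j.-1 <= l1 j)%R : bool)%:R)
     * (b j ^ (l2 j - l2 j.-1) * ((l2 j.-1 <= l2 j)%R : bool)%:R)
     * ((l2 j <= l1 j.-1)%R : bool)%:R ).

Definition wtP (N : nat) (b : nat -> R) (c1 c2 : R) (l1 : nat -> int) : \bar R :=
  \esum_(v in [set: {ffun 'I_N.+1 -> int}]) (wtGP N b c1 c2 l1 (ext0 v))%:E.

Definition PZ (N : nat) (b : nat -> R) (c1 c2 : R) (x0 : int) : \bar R :=
  \esum_(v in [set: {ffun 'I_N -> int}]) wtP N b c1 c2 (path_of x0 v).

Definition PP (N : nat) (b : nat -> R) (c1 c2 : R) (x0 : int)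
    (L1 : {ffun 'I_N -> int}) : R :=
  fine (wtP N b c1 c2 (path_of x0 (fun i => x0 + L1 i)))
    / fine (PZ N b c1 c2 x0).

Definition geom_pmf (q : R) (n : int) : R := ((0 <= n)%R : bool)%:R * ((1 - q) * q ^ n).

Definition PGRW (N : nat) (b : nat -> R) (L1 L2 : nat -> int) : R :=
  \prod_(1 <= j < N.+1)
     (geom_pmf (b j) (L1 j - L1 j.-1) * geom_pmf (b j) (L2 j - L2 j.-1)).

Definition Vfun (N : nat) (c1 c2 : R) (L1 L2 : nat -> int) : R :=
  (c1 * c2) ^ (\big[Num.max/(L2 1%N - L1 0%N)]_(1 <= j < N.+1) (L2 j - L1 j.-1))
  * c2 ^ (L1 N - L2 N).

Definition EV (N : nat) (b : nat -> R) (c1 c2 : R) : \bar R :=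
  \esum_(w in [set: {ffun 'I_N -> int} * {ffun 'I_N -> int}])
     (Vfun N c1 c2 (path_of 0 w.1) (path_of 0 w.2)
        * PGRW N b (path_of 0 w.1) (path_of 0 w.2))%:E.

Definition PstatGeo (N : nat) (b : nat -> R) (c1 c2 : R)
    (L1 : {ffun 'I_N -> int}) : R :=
  fine (\esum_(v in [set: {ffun 'I_N -> int}])
          (Vfun N c1 c2 (path_of 0 L1) (path_of 0 v)
             * PGRW N b (path_of 0 L1) (path_of 0 v))%:E)
    / fine (EV N b c1 c2).

End Defs.

Arguments wtGP {R}. Arguments wtP {R}. Arguments PZ {R}. Arguments PP {R}.
Arguments geom_pmf {R}. Arguments PGRW {R}. Arguments Vfun {R}. Arguments EV {R}.
Arguments PstatGeo {R}.

From HB Require Import structures.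
From mathcomp Require Import all_boot all_order all_algebra.
From mathcomp Require Import all_classical all_reals.
From mathcomp Require Import ereal topology normedtype sequences esum.
From mathcomp Require Import zify ring.
Import Order.TTheory GRing.Theory Num.Theory numFieldNormedType.Exports.
Local Open Scope ring_scope.
Local Open Scope classical_set_scope.

(* Write lambda_1 = x0 + L1 and lambda_2 = x0 - s + L2 with L1(0) = L2(0) = 0,
   so that s = lambda_1^(0) - lambda_2^(0).  The interlacing constraints
   lambda_2^(j) <= lambda_1^(j-1) then say exactly that s >= M, where
   M = max_j (L2(j) - L1(j-1)) is the exponent of c1 c2 in V, and wt^GP becomes
   1{M <= s} (c1 c2)^(s - M) V(L1, L2) P_GRW(L1, L2) / prod_j (1 - b_j)^2.
   Summing the geometric series over s gives the factor (1 - c1 c2)^-1, so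
   wt^P(lambda_1) and Z are one and the same multiple of the L1-marginal of
   V P_GRW and of E_GRW[V]: their ratio is P_statGeo.  E_GRW[V] is finite because
   V <= max(1, c2)^L1(N) max(1, c1)^L2(N) on nondecreasing paths, which bounds it
   by a product of geometric sums that converge since b_j c_i < 1. *)

Section esum_extras.
Context {R : realType}.
Local Open Scope ereal_scope.

Lemma esumZl (T : choiceType) (S : set T) (c : R) (a : T -> \bar R) :
  (0 <= c)%R -> (forall i, S i -> 0 <= a i) ->
  \esum_(i in S) (c%:E * a i) = c%:E * \esum_(i in S) a i.
Proof.
move=> c0 a0; rewrite /esum -ereal_supZl //; last first.
  by apply/set0P; exists 0; exists set0; rewrite ?fsbig_set0 //; exact: fsets_set0.
have sumZ A : fsets S A -> \sum_(x \in A) (c%:E * a x) = c%:E * \sum_(x \in A) a x.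
  move=> [finA AS]; rewrite !fsbig_finite //= big_seq [X in _ * X]big_seq.
  by rewrite ge0_sume_distrr // => x; rewrite in_fset_set // inE => /AS; exact: a0.
congr (ereal_sup _); apply/seteqP; split => [_ [A SA <-]|_ [_ [A SA <-] <-]].
  by exists (\sum_(x \in A) a x); [exists A|rewrite sumZ].
by exists A; rewrite ?sumZ.
Qed.

Lemma esum_pair {A B : choiceType} (f : A -> B -> \bar R) :
  (forall x y, 0 <= f x y) ->
  \esum_(p in [set: A * B]) f p.1 p.2 =
  \esum_(x in [set: A]) \esum_(y in [set: B]) f x y.
Proof.
move=> f0; rewrite esum_esum //.
by congr (esum _ _); apply/seteqP; split.
Qed.

Lemma esum_pairM {A B : choiceType} {f : A -> R} {g : B -> R} {kf kg : R} :
  (forall x, 0 <= f x)%R -> (forall y, 0 <= g y)%R ->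
  \esum_(x in [set: A]) (f x)%:E = kf%:E ->
  \esum_(y in [set: B]) (g y)%:E = kg%:E ->
  \esum_(p in [set: A * B]) (f p.1 * g p.2)%:E = (kf * kg)%:E.
Proof.
move=> f0 g0 sf sg.
have kg0 : (0 <= kg)%R by rewrite -lee_fin -sg esum_ge0 // => y _; rewrite lee_fin.
rewrite (esum_pair (fun x y => (f x * g y)%:E)) => [|x y]; last by rewrite lee_fin mulr_ge0.
transitivity (\esum_(x in [set: A]) (kg%:E * (f x)%:E)).
  apply: eq_esum => x _; under eq_esum do rewrite EFinM.
  rewrite esumZl ?sg 1?muleC // => y _; exact: g0.
by rewrite esumZl ?sf -?EFinM 1?mulrC // => x _; exact: f0.
Qed.

Lemma esum_int_translate (f : int -> \bar R) (m : int) :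
  \esum_(s in [set: int]) f (s - m)%R = \esum_(s in [set: int]) f s.
Proof.
rewrite [RHS](reindex_esum [set: int] [set: int] (fun s => s - m)%R) //.
by rewrite setTT_bijective; exists (fun s => s + m)%R => s; rewrite ?subrK ?addrK.
Qed.

Lemma esum_geometric (q : R) : (0 <= q < 1)%R ->
  \esum_(n in [set: nat]) (q ^+ n)%:E = ((1 - q)^-1)%:E.
Proof.
move=> /andP[q0 q1]; have q_lt1 : (`|q| < 1)%R by rewrite ger0_norm.
rewrite -nneseries_esumT => [|n]; last by rewrite lee_fin exprn_ge0.
have -> : (fun n => \sum_(0 <= i < n) (q ^+ i)%:E) = EFin \o series (geometric 1 q).
  apply/funext => n /=; rewrite /series /= sumEFin; congr (_%:E).
  by apply: eq_bigr => i _; rewrite /geometric /= mul1r.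
rewrite EFin_lim; last exact: is_cvg_geometric_series.
rewrite (cvg_lim _ (@cvg_geometric_series _ 1%R _ q_lt1)) //; congr (_%:E); exact: mul1r.
Qed.

Lemma esum_geometric_int (q : R) (m : int) : (0 <= q < 1)%R ->
  \esum_(s in [set: int]) (((m <= s)%R%:R * q ^ (s - m))%R)%:E = ((1 - q)^-1)%:E.
Proof.
move=> q01; under eq_esum => s _ do rewrite -(subr_ge0 m s).
rewrite (esum_int_translate (fun t => (((0 <= t)%R%:R * q ^ t)%R)%:E)).
rewrite -esum_geometric // -(esum_image setT Posz (fun t => (q ^ t)%:E)) => [|a b _ _ []//].
rewrite [RHS]esum_mkcond; apply: eq_esum => -[n|n] _.
  by rewrite mul1r ifT // inE; exists n.
by rewrite mul0r ifF //; apply/negbTE/negP; rewrite inE => -[].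
Qed.
Local Close Scope ereal_scope.

Lemma fineZl (c : R) (x : \bar R) : fine (c%:E * x)%E = c * fine x.
Proof.
case: x => [r| |] //=; rewrite mulr0 1?mulry 1?mulrNy;
  by case: sgrP => _; rewrite ?mul0e ?mul1e // EFinN mulN1e.
Qed.

Lemma geom_pmf_ge0 (q : R) (n : int) : 0 <= q <= 1 -> 0 <= geom_pmf q n.
Proof. by case/andP=> q0 q1; rewrite mulr_ge0 ?mulr_ge0 ?exprz_ge0 ?subr_ge0. Qed.

Lemma esum_exprz_geom_pmf (q d : R) : 0 < q < 1 -> 0 < d -> q * d < 1 ->
  (\esum_(t in [set: int]) (d ^ t * geom_pmf q t)%:E = ((1 - q) / (1 - q * d))%:E)%E.
Proof.
move=> /andP[q0 q1] d0 qd1.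
transitivity (\esum_(t in [set: int])
    ((1 - q)%:E * (((0 <= t)%R%:R * (q * d) ^ (t - 0))%R)%:E))%E.
  apply: eq_esum => t _; rewrite -EFinM subr0 exprzMl ?unitfE ?gt_eqF //.
  by rewrite /geom_pmf; congr (_%:E); ring.
rewrite esumZl ?esum_geometric_int -?EFinM ?subr_ge0 ?mulr_ge0 ?ltW //.
by move=> t _; rewrite lee_fin mulr_ge0 ?ler0n ?exprz_ge0 ?mulr_ge0 ?ltW.
Qed.

End esum_extras.

Lemma prodr_all (R : pzSemiRingType) (I : Type) (r : seq I) (p : pred I) :
  \prod_(i <- r) ((p i)%:R : R) = (all p r)%:R.
Proof.
elim: r => [|i r IHr]; rewrite ?big_nil ?big_cons //= IHr.
by case: (p i); rewrite ?mul1r ?mul0r.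
Qed.

Lemma exprz_le_max1 (F : realFieldType) (c : F) (e E : int) :
  0 < c -> 0 <= e <= E -> c ^ e <= Num.max 1 c ^ E.
Proof.
case: e => [m|//]; case: E => [n|//] c0 /andP[_]; rewrite lez_nat => mn.
have d1 : 1 <= Num.max 1 c by rewrite le_max lexx.
have cd : c <= Num.max 1 c by rewrite le_max lexx orbT.
rewrite -!exprnP; apply: le_trans (ler_weXn2l d1 mn).
by apply: lerXn2r; rewrite ?nnegrE ?(ltW c0) ?(le_trans ler01 d1).
Qed.

Lemma exprz_telescope {F : fieldType} (c : F) (P : nat -> int) n :
  c != 0 -> P 0%N = 0 -> c ^ P n = \prod_(1 <= j < n.+1) c ^ (P j - P j.-1).
Proof.
move=> c0 P0; elim: n => [|n IHn]; first by rewrite big_geq // P0 expr0z.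
by rewrite big_nat_recr //= -IHn -expfzDr // subrKC.
Qed.

Lemma ext0_ord {n} (v : 'I_n -> int) (i : 'I_n) : ext0 v i = v i.
Proof. by rewrite /ext0 valK. Qed.

Lemma ext0_lt {n} (v : 'I_n -> int) {j} (jn : (j < n)%N) : ext0 v j = v (Ordinal jn).
Proof. by rewrite /ext0 insubT. Qed.

Lemma path_of_translate n x0 (v : 'I_n -> int) j : (j <= n)%N ->
  path_of x0 (fun i => x0 + v i) j = x0 + path_of 0 v j.
Proof. by case: j => [|j] jn /=; rewrite ?addr0 // !(ext0_lt _ jn). Qed.

Definition rcons_ffun {n} (p : {ffun 'I_n -> int} * int) : {ffun 'I_n.+1 -> int} :=
  [ffun i : 'I_n.+1 => if (i < n)%N then ext0 p.1 i else p.2].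

Lemma rcons_ffun_bij n : bijective (@rcons_ffun n).
Proof.
exists (fun f : {ffun 'I_n.+1 -> int} => ([ffun i => f (widen_ord (leqnSn n) i)], f ord_max)).
  move=> [w t]; congr pair; last by rewrite ffunE /= ltnn.
  by apply/ffunP => i; rewrite !ffunE /= ltn_ord ext0_ord.
move=> f; apply/ffunP => i; rewrite !ffunE.
case: ltnP => [i_lt|i_ge].
  by rewrite (ext0_lt _ i_lt) ffunE; congr (f _); apply: val_inj.
by congr (f _); apply: val_inj; apply/eqP; rewrite eqn_leq i_ge -ltnS ltn_ord.
Qed.

Lemma path_of_rcons_ffun n (p : {ffun 'I_n -> int} * int) j : (j <= n)%N ->
  path_of 0 (rcons_ffun p) j = path_of 0 p.1 j.
Proof.
by case: j => [|j] //= jn; rewrite (ext0_lt _ (leqW jn)) ffunE /= jn.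
Qed.

Lemma path_of_rcons_ffun_last n (p : {ffun 'I_n -> int} * int) :
  path_of 0 (rcons_ffun p) n.+1 = p.2.
Proof. by rewrite /= (ext0_lt _ (ltnSn n)) ffunE /= ltnn. Qed.

Definition translated_path {n} (x0 : int) (p : {ffun 'I_n -> int} * int) :
  {ffun 'I_n.+1 -> int} := [ffun i : 'I_n.+1 => x0 - p.2 + path_of 0 p.1 i].

Lemma translated_path_bij n x0 : bijective (@translated_path n x0).
Proof.
exists (fun f : {ffun 'I_n.+1 -> int} =>
  ([ffun j : 'I_n => f (lift ord0 j) - f ord0], x0 - f ord0)).
  move=> [w s]; congr pair; last by rewrite ffunE /=; ring.
  by apply/ffunP => j; rewrite !ffunE /= ext0_ord; ring.
move=> f; apply/ffunP => -[[|k] kn]; rewrite !ffunE /=.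
  by rewrite (_ : Ordinal kn = ord0) //; [ring | exact: val_inj].
have kn' : (k < n)%N := kn.
rewrite (ext0_lt _ kn') ffunE (_ : lift ord0 _ = Ordinal kn); first by ring.
exact: val_inj.
Qed.

Lemma ext0_translated_path n x0 (p : {ffun 'I_n -> int} * int) j : (j <= n)%N ->
  ext0 (translated_path x0 p) j = x0 - p.2 + path_of 0 p.1 j.
Proof. by move=> jn; rewrite (ext0_lt _ (jn : (j < n.+1)%N)) ffunE. Qed.

Lemma eq_wtGP {R : realType} {N} {b : nat -> R} {c1 c2 : R} {l1 l1' l2 l2' : nat -> int} :
  {in [pred j | (j <= N)%N], l1 =1 l1'} -> {in [pred j | (j <= N)%N], l2 =1 l2'} ->
  wtGP N b c1 c2 l1 l2 = wtGP N b c1 c2 l1' l2'.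
Proof.
move=> e1 e2; rewrite /wtGP !e1 ?e2 ?inE //; congr (_ * _).
apply: eq_big_nat => j /andP[_ jN].
have jN' : (j.-1 <= N)%N by rewrite (leq_trans (leq_pred j)).
by rewrite !e1 ?e2.
Qed.

Section path_increments.
Context {R : realType}.
Variables (g : nat -> int -> R) (K : nat -> R).
Hypotheses (g_ge0 : forall j t, 0 <= g j t)
  (esum_g : forall j, (\esum_(t in [set: int]) (g j t)%:E = (K j)%:E)%E).

Let K_ge0 j : 0 <= K j.
Proof. by rewrite -lee_fin -esum_g esum_ge0 // => t _; rewrite lee_fin. Qed.

Lemma esum_path_increments n :
  (\esum_(L in [set: {ffun 'I_n -> int}])
     (\prod_(1 <= j < n.+1) g j (path_of 0 L j - path_of 0 L j.-1))%:E =
   (\prod_(1 <= j < n.+1) K j)%:E)%E.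
Proof.
elim: n => [|n IHn].
  have -> : [set: {ffun 'I_0 -> int}] = [set [ffun=> 0]].
    by apply/seteqP; split => // f _; apply/ffunP => -[].
  by rewrite esum_set1 ?big_geq ?lee_fin.
rewrite (reindex_esum setT setT (@rcons_ffun n)); last first.
  by rewrite setTT_bijective; exact: rcons_ffun_bij.
set A := fun w : {ffun 'I_n -> int} =>
  \prod_(1 <= j < n.+1) g j (path_of 0 w j - path_of 0 w j.-1).
have split_last p : \prod_(1 <= j < n.+2)
    g j (path_of 0 (rcons_ffun p) j - path_of 0 (rcons_ffun p) j.-1) =
    A p.1 * g n.+1 (p.2 - path_of 0 p.1 n).
  rewrite big_nat_recr // path_of_rcons_ffun_last path_of_rcons_ffun //.
  congr (_ * _); apply: eq_big_nat => j /andP[_ jn].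
  by rewrite !path_of_rcons_ffun // (leq_trans (leq_pred j)).
under eq_esum do rewrite split_last EFinM.
rewrite (esum_pair (fun w t => (A w)%:E * (g n.+1 (t - path_of 0 w n))%:E)%E); last first.
  by move=> w t; rewrite -EFinM lee_fin mulr_ge0 ?prodr_ge0.
transitivity (\esum_(w in [set: {ffun 'I_n -> int}]) ((K n.+1)%:E * (A w)%:E))%E.
  apply: eq_esum => w _; rewrite esumZl ?prodr_ge0 //; last by move=> t _; rewrite lee_fin.
  by rewrite (esum_int_translate (fun t => (g n.+1 t)%:E)) esum_g muleC.
rewrite esumZl // => [|w _]; last by rewrite lee_fin prodr_ge0.
by rewrite IHn -EFinM [X in _ = X%:E]big_nat_recr //= mulrC.
Qed.

End path_increments.

Section horizontal_path.
Context {R : realType}.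
Variables (N : nat) (b : nat -> R) (c1 c2 : R).
Hypotheses (N_gt0 : (0 < N)%N) (b01 : forall j, 0 < b j < 1)
  (c1_gt0 : 0 < c1) (c2_gt0 : 0 < c2).

Local Notation nondecreasing_path P :=
  {in [pred j | (j <= N)%N] &, {homo P : i j / (i <= j)%N >-> i <= j}}.

Definition maxgap (P1 P2 : nat -> int) : int :=
  \big[Num.max/(P2 1%N - P1 0%N)]_(1 <= j < N.+1) (P2 j - P1 j.-1).

Lemma maxgap_le P1 P2 s : (maxgap P1 P2 <= s) =
  all (fun j => P2 j - P1 j.-1 <= s) (index_iota 1 N.+1).
Proof.
have one_in : 1%N \in index_iota 1 N.+1 by rewrite mem_index_iota; lia.
apply/idP/allP => [M_le j j_in|gap_le].
  exact: le_trans (le_bigmax_seq _ _ _ _ j_in isT) M_le.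
rewrite /maxgap big_seq; apply: bigmax_le => [|j]; first exact: gap_le one_in.
exact: gap_le.
Qed.

Lemma prod_gap_indicator P1 P2 s :
  \prod_(1 <= j < N.+1) ((P2 j - P1 j.-1 <= s)%R%:R : R) = (maxgap P1 P2 <= s)%R%:R.
Proof. by rewrite prodr_all maxgap_le. Qed.

Definition geom_const : R := \prod_(1 <= j < N.+1) (1 - b j).

Definition walk_wt (P : nat -> int) : R :=
  \prod_(1 <= j < N.+1) (b j ^ (P j - P j.-1) * (P j.-1 <= P j)%R%:R).

Definition walk_pmf (P : nat -> int) : R :=
  \prod_(1 <= j < N.+1) geom_pmf (b j) (P j - P j.-1).

Definition statGeo_wt (P1 P2 : nat -> int) : R :=
  Vfun N c1 c2 P1 P2 * PGRW N b P1 P2.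

Lemma PGRWE P1 P2 : PGRW N b P1 P2 = walk_pmf P1 * walk_pmf P2.
Proof. exact: big_split. Qed.

Lemma walk_pmfE P : walk_pmf P = geom_const * walk_wt P.
Proof. by rewrite -big_split; apply: eq_bigr => j _; rewrite /geom_pmf subr_ge0 /=; ring. Qed.

Lemma geom_const_gt0 : 0 < geom_const.
Proof. by apply: prodr_gt0 => j _; rewrite subr_gt0; case/andP: (b01 j). Qed.

Lemma walk_pmf_ge0 P : 0 <= walk_pmf P.
Proof.
by apply: prodr_ge0 => j _; case/andP: (b01 j) => b0 b1; rewrite geom_pmf_ge0 ?ltW.
Qed.

Lemma statGeo_wt_ge0 P1 P2 : 0 <= statGeo_wt P1 P2.
Proof.
rewrite /statGeo_wt PGRWE !mulr_ge0 ?walk_pmf_ge0 ?exprz_ge0 ?mulr_ge0 ?ltW //.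
Qed.

Lemma wtGP_translate x0 s P1 P2 : P1 0%N = 0 -> P2 0%N = 0 ->
  wtGP N b c1 c2 (fun j => x0 + P1 j) (fun j => x0 - s + P2 j) =
  c1 ^ s * c2 ^ (s + (P1 N - P2 N)) *
  (walk_wt P1 * walk_wt P2 * (maxgap P1 P2 <= s)%R%:R).
Proof.
move=> P10 P20; rewrite /wtGP P10 P20 -prod_gap_indicator /walk_wt -!big_split /=.
have -> : x0 + 0 - (x0 - s + 0) = s by ring.
have -> : x0 + P1 N - (x0 - s + P2 N) = s + (P1 N - P2 N) by ring.
congr (_ * _); apply: eq_bigr => j _.
have -> : x0 + P1 j - (x0 + P1 j.-1) = P1 j - P1 j.-1 by ring.
have -> : x0 - s + P2 j - (x0 - s + P2 j.-1) = P2 j - P2 j.-1 by ring.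
have -> : (x0 - s + P2 j <= x0 + P1 j.-1) = (P2 j - P1 j.-1 <= s) by apply/idP/idP; lia.
by rewrite !lerD2l.
Qed.

Lemma wtGP_translateE x0 s P1 P2 : P1 0%N = 0 -> P2 0%N = 0 ->
  wtGP N b c1 c2 (fun j => x0 + P1 j) (fun j => x0 - s + P2 j) =
  (maxgap P1 P2 <= s)%R%:R * (c1 * c2) ^ (s - maxgap P1 P2) *
  statGeo_wt P1 P2 / geom_const ^+ 2.
Proof.
move=> P10 P20; rewrite wtGP_translate // /statGeo_wt /Vfun -/(maxgap P1 P2).
rewrite PGRWE !walk_pmfE.
set M := maxgap P1 P2.
have c1c2_neq0 : c1 * c2 != 0 by rewrite mulf_neq0 ?gt_eqF.
have -> : c1 ^ s * c2 ^ (s + (P1 N - P2 N)) =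
    (c1 * c2) ^ (s - M) * ((c1 * c2) ^ M * c2 ^ (P1 N - P2 N)).
  rewrite mulrA -expfzDr // subrK exprzMl ?unitfE ?gt_eqF //.
  by rewrite expfzDr ?gt_eqF // mulrA.
have := geom_const_gt0; rewrite lt0r => /andP[G_neq0 _].
by field.
Qed.

Hypothesis c1c2_lt1 : c1 * c2 < 1.

Definition Z_ratio : R := (1 - c1 * c2)^-1 / geom_const ^+ 2.

Lemma Z_ratio_gt0 : 0 < Z_ratio.
Proof. by rewrite divr_gt0 ?invr_gt0 ?subr_gt0 ?exprn_gt0 ?geom_const_gt0. Qed.

Lemma wtP_translate x0 (L1 : 'I_N -> int) :
  wtP N b c1 c2 (path_of x0 (fun i => x0 + L1 i)) =
  (Z_ratio%:E * \esum_(v in [set: {ffun 'I_N -> int}])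
                 (statGeo_wt (path_of 0 L1) (path_of 0 v))%:E)%E.
Proof.
rewrite /wtP (reindex_esum setT setT (translated_path x0)); last first.
  by rewrite setTT_bijective; exact: translated_path_bij.
set sw := fun v : {ffun 'I_N -> int} => statGeo_wt (path_of 0 L1) (path_of 0 v).
set M := fun v : {ffun 'I_N -> int} => maxgap (path_of 0 L1) (path_of 0 v).
transitivity (\esum_(p in [set: {ffun 'I_N -> int} * int])
   ((sw p.1 / geom_const ^+ 2)%:E *
    ((M p.1 <= p.2)%R%:R * (c1 * c2) ^ (p.2 - M p.1))%:E))%E.
  apply: eq_esum => -[v s] _; rewrite -EFinM /=.
  rewrite (eq_wtGP (l1' := fun j => x0 + path_of 0 L1 j)
                   (l2' := fun j => x0 - s + path_of 0 v j)).
  - by rewrite wtGP_translateE // /sw /M; congr (_%:E); ring.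
  - by move=> j jN; rewrite path_of_translate.
  - by move=> j jN; rewrite ext0_translated_path.
have q_ge0 : 0 <= c1 * c2 by rewrite mulr_ge0 ?ltW.
have sw_ge0 v : 0 <= sw v / geom_const ^+ 2.
  by rewrite divr_ge0 ?statGeo_wt_ge0 ?exprn_ge0 ?ltW ?geom_const_gt0.
rewrite (esum_pair (fun v s => (sw v / geom_const ^+ 2)%:E *
    ((M v <= s)%R%:R * (c1 * c2) ^ (s - M v))%:E)%E); last first.
  by move=> v s; rewrite -EFinM lee_fin mulr_ge0 // mulr_ge0 // exprz_ge0.
rewrite -esumZl ?ltW ?Z_ratio_gt0 //; last by move=> v _; rewrite lee_fin statGeo_wt_ge0.
apply: eq_esum => v _; rewrite esumZl ?esum_geometric_int -?EFinM ?q_ge0 //.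
- by rewrite /Z_ratio /sw; congr (_%:E); ring.
- by move=> s _; rewrite lee_fin mulr_ge0 // exprz_ge0.
Qed.

Lemma PZ_eq x0 : PZ N b c1 c2 x0 = (Z_ratio%:E * EV N b c1 c2)%E.
Proof.
have translate_bij :
    set_bij setT setT (fun L : {ffun 'I_N -> int} => [ffun i => x0 + L i]).
  by rewrite setTT_bijective; exists (fun v : {ffun 'I_N -> int} => [ffun i => v i - x0]) => L;
    apply/ffunP => i; rewrite !ffunE; ring.
rewrite /PZ (reindex_esum setT setT _ _ translate_bij).
rewrite /EV (esum_pair (fun L v : {ffun 'I_N -> int} =>
  (statGeo_wt (path_of 0 L) (path_of 0 v))%:E)) => [|L v]; last first.
  by rewrite lee_fin statGeo_wt_ge0.
rewrite -esumZl ?ltW ?Z_ratio_gt0 // => [|L _]; last first.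
  by rewrite esum_ge0 // => v _; rewrite lee_fin statGeo_wt_ge0.
apply: eq_esum => L _; rewrite -(wtP_translate x0).
by congr (wtP _ _ _ _ (path_of _ _)); apply/funext => i; rewrite ffunE.
Qed.

Lemma PP_eq_PstatGeo x0 L1 : PP N b c1 c2 x0 L1 = PstatGeo N b c1 c2 L1.
Proof.
(* No finiteness is needed: [fine] sends infinite sums to 0 on both sides. *)
rewrite /PP /PstatGeo wtP_translate PZ_eq !fineZl.
by rewrite invfM mulrACA mulfV ?mul1r // gt_eqF // Z_ratio_gt0.
Qed.

Lemma walk_pmf_neq0_nondecreasing P : walk_pmf P != 0 -> nondecreasing_path P.
Proof.
rewrite prodf_seq_neq0 => /allP steps.
apply: Order.NatMonotonyTheory.nondecn_inP => [i j _ jN k /andP[_ kj]|i _ iN].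
  by move: jN; rewrite !inE => /(leq_trans (ltnW kj)).
have step_in : i.+1 \in index_iota 1 N.+1.
  by rewrite mem_index_iota; move: iN; rewrite inE; lia.
move: (steps _ step_in) => /=.
by rewrite /geom_pmf subr_ge0; case: (P i <= P i.+1)%R; rewrite ?mul0r ?eqxx.
Qed.

Lemma maxgap_bounds {P1 P2} : P1 0%N = 0 -> P2 0%N = 0 ->
  nondecreasing_path P1 -> nondecreasing_path P2 ->
  [/\ 0 <= maxgap P1 P2, maxgap P1 P2 <= P2 N & P2 N - P1 N <= maxgap P1 P2].
Proof.
move=> P10 P20 P1up P2up; split.
- apply: (le_trans _ (bigmax_ge_id _ _ _ _)).
  by rewrite P10 subr0 -P20 P2up ?inE.
- rewrite maxgap_le; apply/allP => j; rewrite mem_index_iota => /andP[_ jN].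
  have : P1 0%N <= P1 j.-1 by rewrite P1up ?inE // (leq_trans (leq_pred j)).
  have : P2 j <= P2 N by rewrite P2up ?inE.
  lia.
- have N_in : N \in index_iota 1 N.+1 by rewrite mem_index_iota; lia.
  apply: (le_trans _ (le_bigmax_seq _ _ _ _ N_in isT)).
  by rewrite lerB ?lexx // P1up ?inE ?leq_pred.
Qed.

Lemma Vfun_le P1 P2 : P1 0%N = 0 -> P2 0%N = 0 ->
  nondecreasing_path P1 -> nondecreasing_path P2 ->
  Vfun N c1 c2 P1 P2 <= Num.max 1 c2 ^ P1 N * Num.max 1 c1 ^ P2 N.
Proof.
move=> P10 P20 P1up P2up.
have [M_ge0 M_le M_ge] := maxgap_bounds P10 P20 P1up P2up.
rewrite /Vfun -/(maxgap P1 P2) exprzMl ?unitfE ?gt_eqF // -mulrA -expfzDr ?gt_eqF //.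
rewrite mulrC; apply: ler_pM; rewrite ?exprz_ge0 ?(ltW c1_gt0) ?(ltW c2_gt0) //.
  by apply: exprz_le_max1 => //; apply/andP; split; lia.
by apply: exprz_le_max1; rewrite ?M_ge0.
Qed.

Lemma statGeo_wt_le P1 P2 : P1 0%N = 0 -> P2 0%N = 0 ->
  statGeo_wt P1 P2 <=
  (Num.max 1 c2 ^ P1 N * walk_pmf P1) * (Num.max 1 c1 ^ P2 N * walk_pmf P2).
Proof.
move=> P10 P20; rewrite /statGeo_wt PGRWE.
have [->|/walk_pmf_neq0_nondecreasing P1up] := eqVneq (walk_pmf P1) 0.
  by rewrite !(mulr0, mul0r).
have [->|/walk_pmf_neq0_nondecreasing P2up] := eqVneq (walk_pmf P2) 0.
  by rewrite !(mulr0, mul0r).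
rewrite [X in _ <= X]mulrACA; apply: ler_wpM2r; first by rewrite mulr_ge0 ?walk_pmf_ge0.
exact: Vfun_le.
Qed.

Lemma esum_walk_pmf_exprz d : 0 < d -> (forall j, b j * d < 1) ->
  (\esum_(L in [set: {ffun 'I_N -> int}])
     (d ^ path_of 0 L N * walk_pmf (path_of 0 L))%:E =
   (\prod_(1 <= j < N.+1) ((1 - b j) / (1 - b j * d)))%:E)%E.
Proof.
move=> d0 bd1.
have g_ge0 j t : 0 <= d ^ t * geom_pmf (b j) t.
  by case/andP: (b01 j) => b0 b1; rewrite mulr_ge0 ?exprz_ge0 ?geom_pmf_ge0 ?ltW.
have esum_g j := esum_exprz_geom_pmf _ _ (b01 j) d0 (bd1 j).
rewrite -(esum_path_increments _ _ g_ge0 esum_g); apply: eq_esum => L _.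
by rewrite exprz_telescope ?gt_eqF // -big_split.
Qed.

Hypotheses (bc1_lt1 : forall j, b j * c1 < 1) (bc2_lt1 : forall j, b j * c2 < 1).

Lemma EV_lt_pinfty : (EV N b c1 c2 < +oo)%E.
Proof.
have bd_lt1 (c : R) : (forall j, b j * c < 1) -> forall j, b j * Num.max 1 c < 1.
  by move=> bc j; rewrite maxEle; case: ifP; rewrite ?mulr1 ?bc //; case/andP: (b01 j).
have d_gt0 (c : R) : 0 < Num.max 1 c by rewrite lt_max ltr01.
pose F d (L : {ffun 'I_N -> int}) := d ^ path_of 0 L N * walk_pmf (path_of 0 L).
have F_ge0 (c : R) L : 0 <= F (Num.max 1 c) L.
  by rewrite mulr_ge0 ?exprz_ge0 ?walk_pmf_ge0 ?ltW.
apply: (@le_lt_trans _ _ (\esum_(w in [set: {ffun 'I_N -> int} * {ffun 'I_N -> int}])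
    (F (Num.max 1 c2) w.1 * F (Num.max 1 c1) w.2)%:E)%E).
  by apply: le_esum => w _; rewrite lee_fin statGeo_wt_le.
rewrite (esum_pairM (F_ge0 c2) (F_ge0 c1)
  (esum_walk_pmf_exprz _ (d_gt0 c2) (bd_lt1 _ bc2_lt1))
  (esum_walk_pmf_exprz _ (d_gt0 c1) (bd_lt1 _ bc1_lt1))).
exact: ltry.
Qed.

Lemma PZ_lt_pinfty x0 : (PZ N b c1 c2 x0 < +oo)%E.
Proof.
have EV_fin : EV N b c1 c2 \is a fin_num.
  rewrite ge0_fin_numE ?EV_lt_pinfty // esum_ge0 // => w _.
  by rewrite lee_fin statGeo_wt_ge0.
by rewrite PZ_eq -(fineK EV_fin) -EFinM ltry.
Qed.

End horizontal_path.

Theorem proposition2p17 (R : realType) (N : nat) (a : int -> R) (c1 c2 : R)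
    (k : int) :
  (0 < N)%N ->
  (forall i : int, a (i + N%:Z) = a i) ->
  (forall i : int, 0 < a i < 1) ->
  0 < c1 -> 0 < c2 ->
  (forall i j : int, a i * a j < 1) ->
  (forall i : int, a i * c1 < 1) ->
  (forall i : int, a i * c2 < 1) ->
  c1 * c2 < 1 ->
  let b : nat -> R := fun j => a (k + j%:Z) in
  forall x0 : int,
    (PZ N b c1 c2 x0 < +oo)%E /\ (EV N b c1 c2 < +oo)%E /\
    forall L1 : {ffun 'I_N -> int}, PP N b c1 c2 x0 L1 = PstatGeo N b c1 c2 L1.
Proof.
(* Periodicity of a and a_i a_j < 1 only matter for the full periodic model,
   not for a single horizontal path. *)
move=> N_gt0 _ a01 c1_gt0 c2_gt0 _ ac1 ac2 c1c2_lt1 b x0.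
have b01 j : 0 < b j < 1 := a01 _.
have bc1_lt1 j : b j * c1 < 1 := ac1 _.
have bc2_lt1 j : b j * c2 < 1 := ac2 _.
split; first exact: PZ_lt_pinfty.
split; first exact: EV_lt_pinfty.
by move=> L1; apply: PP_eq_PstatGeo.
Qed.
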